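(* For a finite group $G$ and a nonnormal subgroup $H$ of $G$ with $H\cong\mathbb Z_2$, let $r$ be the number of fixed points of the left translation action of $H$ on $G/H$ (equivalently $r=[Z_G(H):H]$, where $Z_G(H)$ is the centralizer of $H$) and let $q$ be the number of two-element orbits of this action (so $[G:H]=r+2q$). Then a pair $(r,q)$ of positive integers arises in this way from some such $G$ and $H$ if and only if $r$ divides $2q$. *)

From mathcomp Require Import all_boot all_fingroup.
Set Implicit Arguments. Unset Strict Implicit. Unset Printing Implicit Defensive.
Local Open Scope group_scope.

Section LeftTranslation.
Variable gT : finGroupType.

Definition ltrans_orbit (H C : {set gT}) : {set {set gT}} :=
  [set h *: C | h in H].

Definition n_fixed_cosets (H G : {set gT}) : nat :=
  #|[set C in lcosets H G | [forall h in H, h *: C == C]]|.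

Definition n_two_orbits (H G : {set gT}) : nat :=
  #|[set O in ltrans_orbit H @: lcosets H G | #|O| == 2]|.
End LeftTranslation.

From HB Require Import structures.
From mathcomp Require Import all_boot all_fingroup ssralg zmodp cyclic zify.
Set Implicit Arguments. Unset Strict Implicit. Unset Printing Implicit Defensive.
Import GRing.Theory.

(* Write H = <[h]> with h an involution.  The coset xH is fixed by h exactly
   when x centralises h, so r = |C_G(h) : H|, and the cosets not fixed by h
   pair up into the two-element orbits, so r + 2q = |G : H|.  As
   H <= C_G(h) <= G, r divides r + 2q, hence 2q.  Conversely, in
   Z_a x D_2n with H generated by a reflection s, the centraliser of s is
   Z_a x {y | 2y = 0} x <s>, so r = a gcd(2, n) and r + 2q = an; writing
   2q = kr, take (a, n) = (r, k + 1) for k even and (r/2, 2(k + 1)) for k odd. *)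

Section InvolutionOrbits.
Variables (T : finType) (f : T -> T) (S : {set T}).
Hypotheses (fK : involutive f) (fS : {in S, forall x, f x \in S}).

Let orbit2 x := [set x; f x].

Lemma orbit2_mem x y : y \in orbit2 x -> orbit2 y = orbit2 x.
Proof. by rewrite !inE => /orP[]/eqP->; rewrite /orbit2 ?fK 1?setUC. Qed.

Lemma card_orbit2 x : (#|orbit2 x| == 2) = (f x != x).
Proof. by rewrite cards2 [f x == x]eq_sym; case: (x != f x). Qed.

Lemma card_fixed_add_two_orbits :
  #|[set x in S | f x == x]| + 2 * #|[set O in orbit2 @: S | #|O| == 2]| = #|S|.
Proof.
set N := [set x in S | f x != x].
have two_orbitsE : [set O in orbit2 @: S | #|O| == 2] = orbit2 @: N.
  apply/setP => O; rewrite inE; apply/andP/imsetP => [[/imsetP[x Sx ->]]|[x]].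
    by rewrite card_orbit2 => fx; exists x; rewrite // inE Sx.
  by rewrite inE => /andP[Sx fx] ->; rewrite card_orbit2 fx imset_f.
have partN : partition (orbit2 @: N) N.
  apply/and3P; split.
  - apply/eqP/setP => y; apply/bigcupP/idP => [[_ /imsetP[x Nx ->]]|Ny].
      move: Nx; rewrite !inE => /andP[Sx fx] /orP[]/eqP->; first by rewrite Sx.
      by rewrite fS // fK eq_sym.
    by exists (orbit2 y); rewrite ?imset_f // !inE eqxx.
  - apply/trivIsetP => _ _ /imsetP[x _ ->] /imsetP[y _ ->]; rewrite -setI_eq0.
    apply: contraR => /set0Pn[z /setIP[/orbit2_mem <- /orbit2_mem <-]].
    by rewrite eqxx.
  - by apply/imsetP => -[x _ /setP/(_ x)]; rewrite !inE eqxx.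
have cardN : #|N| = #|orbit2 @: N| * 2.
  apply: card_uniform_partition partN => _ /imsetP[x + ->].
  by rewrite inE => /andP[_ fx]; apply/eqP; rewrite card_orbit2.
rewrite two_orbitsE mulnC -cardN -(cardsID [set x | f x == x] S).
by congr (_ + _); apply: eq_card => x; rewrite !inE andbC.
Qed.
End InvolutionOrbits.

Lemma card_Zp_fixed_opp n :
  #|[set y : 'I_n.+1 | (- y)%R == y]| = if odd n.+1 then 1 else 2.
Proof.
have oppE (y : 'I_n.+1) : ((- y)%R == y) = (n.+1 %| y * 2).
  by rewrite eq_sym -addr_eq0 -val_eqE /= addnn -muln2.
case: ifP => [odd_n | even_n].
  have -> : [set y : 'I_n.+1 | (- y)%R == y] = [set ord0].
    apply/setP => y; rewrite !inE oppE Gauss_dvdl ?coprimen2 //.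
    by rewrite -val_eqE /dvdn modn_small.
  exact: cards1.
set m := n.+1./2.
have n_eq : n.+1 = m * 2 by rewrite muln2 -[LHS]odd_double_half even_n.
have m_gt0 : 0 < m by rewrite -(ltn_pmul2r (isT : 0 < 2)) -n_eq.
have m_lt : m < n.+1 by rewrite n_eq ltn_Pmulr.
have -> : [set y : 'I_n.+1 | (- y)%R == y] = [set ord0; Ordinal m_lt].
  apply/setP => y; rewrite !inE oppE -!val_eqE /= [in X in X %| _]n_eq dvdn_pmul2r //.
  apply/dvdnP/orP => [[k y_eq] | [] /eqP->]; [| by exists 0 | by exists 1; rewrite mul1n].
  have : k * m < 2 * m by rewrite -y_eq mulnC -n_eq.
  rewrite ltn_pmul2r // y_eq.
  by case: k {y_eq} => [|[|]] // _; [left | right]; rewrite ?mul0n ?mul1n.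
by rewrite cards2 -val_eqE /= eq_sym -lt0n m_gt0.
Qed.

Local Open Scope group_scope.

Section Involution.
Variables (gT : finGroupType) (h : gT).
Hypothesis h2 : #[h] = 2.

Lemma involution_neq1 : h != 1.
Proof. by rewrite -order_eq1 h2. Qed.

Lemma mul_involution : h * h = 1.
Proof. by have := expg_order h; rewrite h2. Qed.

Lemma fixed_by_cycle (C : {set gT}) : [forall k in <[h]>, k *: C == C] = (h *: C == C).
Proof.
apply/forall_inP/eqP => [fixC | hC k]; first by apply/eqP/fixC/cycle_id.
by rewrite (cycle2g h2) !inE => /orP[]/eqP->; rewrite ?lcoset1 ?hC.
Qed.

Lemma lcoset_fixedE x : (h *: (x *: <[h]>) == x *: <[h]>) = (x \in 'C[h]).
Proof.
rewrite (sameP cent1P eqP) -lcosetM (sameP eqP lcoset_eqP) mem_lcoset -conjgE /=.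
rewrite (cycle2g h2) !inE conjg_eq1 (negPf involution_neq1) /= conjgE.
by rewrite -(inj_eq (mulgI x)) mulKVg eq_sym.
Qed.

Lemma ltrans_orbit_cycle2 (C : {set gT}) : ltrans_orbit <[h]> C = [set C; h *: C].
Proof. by rewrite /ltrans_orbit (cycle2g h2) imsetU1 imset_set1 lcoset1. Qed.

Variable G : {group gT}.

Lemma n_fixed_cosets_cycle2 : n_fixed_cosets <[h]> G = #|'C_G[h] : <[h]>|.
Proof.
rewrite /n_fixed_cosets -card_lcosets; apply: eq_card => C.
rewrite inE fixed_by_cycle; apply/andP/lcosetsP => [[/lcosetsP[x Gx ->]] | [x]].
  by rewrite lcoset_fixedE => cx; exists x => //; exact/setIP.
by move=> /setIP[Gx cx] ->; rewrite lcoset_fixedE cx; split => //; apply/lcosetsP; exists x.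
Qed.

Lemma n_fixed_cosets_add_two_orbits_cycle2 : h \in G ->
  n_fixed_cosets <[h]> G + 2 * n_two_orbits <[h]> G = #|G : <[h]>|.
Proof.
move=> Gh; rewrite -card_lcosets -(card_fixed_add_two_orbits (f := fun C => h *: C)).
- rewrite /n_two_orbits (eq_imset _ ltrans_orbit_cycle2); congr (_ + _).
  by apply: eq_card => C; rewrite !inE fixed_by_cycle.
- by move=> C /=; rewrite -lcosetM mul_involution lcoset1.
- by move=> _ /lcosetsP[x Gx ->]; apply/lcosetsP; exists (h * x); rewrite ?groupM ?lcosetM.
Qed.

Lemma n_two_orbits_normal_cycle2 : <[h]> <| G -> n_two_orbits <[h]> G = 0.
Proof.
move=> nhG; have Gh : h \in G by rewrite -cycle_subG normal_sub.
have centG : 'C_G[h] = G.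
  apply/setIidPl/subsetP => x Gx; rewrite cent1C; apply/cent1P/commgP/conjg_fixP.
  have := memJ_norm h (subsetP (normal_norm nhG) x Gx).
  by rewrite cycle_id (cycle2g h2) !inE conjg_eq1 (negPf involution_neq1) => /eqP.
move/eqP: (n_fixed_cosets_add_two_orbits_cycle2 Gh).
by rewrite n_fixed_cosets_cycle2 centG -[X in _ == X]addn0 eqn_add2l muln_eq0 => /eqP.
Qed.
End Involution.

Lemma n_fixed_cosets_dvdn (gT : finGroupType) (G H : {group gT}) :
  H \subset G -> #|H| = 2 -> n_fixed_cosets H G %| 2 * n_two_orbits H G.
Proof.
move=> sHG H2; have /cyclicP[h H_eq] : cyclic H by apply: prime_cyclic; rewrite H2.
have h2 : #[h] = 2 by rewrite orderE -H_eq.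
have Gh : h \in G by rewrite -cycle_subG -H_eq.
rewrite H_eq -(dvdn_addr _ (dvdnn _)) n_fixed_cosets_add_two_orbits_cycle2 //.
rewrite n_fixed_cosets_cycle2 // indexSg ?subsetIl // cycle_subG.
by apply/setIP; split; last exact: cent1id.
Qed.

Section CyclicTimesDihedral.
Variables a n : nat.

(* (x, y, b) stands for (x, rho^y sigma^b) in Z_(a+1) x D_(2(n+1)), where
   sigma rho sigma = rho^-1. *)
Definition cyc_dihedral := ('I_a.+1 * 'I_n.+1 * bool)%type.
HB.instance Definition _ := Finite.copy cyc_dihedral cyc_dihedral.

Definition flip (b : bool) (y : 'I_n.+1) := if b then (- y)%R else y.

Definition cd_mul (u v : cyc_dihedral) : cyc_dihedral :=
  ((u.1.1 + v.1.1)%R, (u.1.2 + flip u.2 v.1.2)%R, u.2 (+) v.2).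
Definition cd_one : cyc_dihedral := (0%R, 0%R, false).
Definition cd_inv (u : cyc_dihedral) : cyc_dihedral :=
  ((- u.1.1)%R, (- flip u.2 u.1.2)%R, u.2).

Lemma flip0 b : flip b 0%R = 0%R.
Proof. by case: b; rewrite /= ?oppr0. Qed.

Lemma cd_mulA : associative cd_mul.
Proof.
move=> [[x1 y1] b1] [[x2 y2] b2] [[x3 y3] b3]; congr (_, _, _); rewrite /= ?addrA ?addbA //.
by case: b1; case: b2; rewrite /= ?opprD ?opprK addrA.
Qed.

Lemma cd_mul1 : left_id cd_one cd_mul.
Proof. by move=> [[x y] b]; rewrite /cd_mul /= !add0r. Qed.

Lemma cd_mulV : left_inverse cd_one cd_inv cd_mul.
Proof. by move=> [[x y] []]; rewrite /cd_mul /= addNr ?opprK ?subrr ?addNr. Qed.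

HB.instance Definition _ := Finite_isGroup.Build cyc_dihedral cd_mulA cd_mul1 cd_mulV.

Lemma cd_mulE (u v : cyc_dihedral) : u * v = cd_mul u v.
Proof. by []. Qed.

Definition reflection : cyc_dihedral := (0%R, 0%R, true).

Lemma order_reflection : #[reflection] = 2%N.
Proof. by apply: nt_prime_order; rewrite // expgS expg1 cd_mulE /cd_mul /= oppr0 !addr0. Qed.

Lemma cent1_reflection : 'C[reflection] = [set u : cyc_dihedral | (- u.1.2)%R == u.1.2].
Proof.
apply/setP => -[[x y] b]; rewrite cent1E !cd_mulE /cd_mul /= flip0 !addr0 !add0r inE /=.
by rewrite addbT !xpair_eqE !eqxx andbT /= eq_sym.
Qed.

Lemma card_cent1_reflection :
  #|'C[reflection]| = (a.+1 * #|[set y : 'I_n.+1 | (- y)%R == y]| * 2)%N.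
Proof.
have -> : 'C[reflection] = setX (setX setT [set y : 'I_n.+1 | (- y)%R == y]) setT.
  by apply/setP => u; rewrite cent1_reflection !inE andbT.
by rewrite !cardsX !cardsT card_ord card_bool.
Qed.

Lemma card_cyc_dihedral : #|[set: cyc_dihedral]| = (a.+1 * n.+1 * 2)%N.
Proof. by rewrite cardsT !card_prod !card_ord card_bool. Qed.
End CyclicTimesDihedral.

Lemma cyc_dihedral_realizes (a n r q : nat) : 0 < a -> 0 < n -> 0 < q ->
  (r = a * (if odd n then 1 else 2))%N -> (r + 2 * q = a * n)%N ->
  exists (gT : finGroupType) (G H : {group gT}),
    [/\ H \subset G, #|H| = 2, ~~ (H <| G),
        n_fixed_cosets H G = r & n_two_orbits H G = q].
Proof.
case: a => // a; case: n => // n _ _ q_gt0 r_eq index_eq.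
have refl2 := order_reflection a n.
have fixedE : n_fixed_cosets <[reflection a n]> [set: cyc_dihedral a n] = r.
  rewrite n_fixed_cosets_cycle2 // setTI -divgS ?cycle_subG ?cent1id //.
  by rewrite card_cent1_reflection card_Zp_fixed_opp -orderE refl2 mulnK.
have twoE : n_two_orbits <[reflection a n]> [set: cyc_dihedral a n] = q.
  have := n_fixed_cosets_add_two_orbits_cycle2 refl2 (in_setT _).
  rewrite fixedE -divgS ?subsetT // card_cyc_dihedral -orderE refl2 mulnK // -index_eq.
  by move/addnI/eqP; rewrite eqn_pmul2l // => /eqP.
exists _, [set: cyc_dihedral a n]%G, <[reflection a n]>%G; split => //.
  exact: subsetT.
by apply: contraTN q_gt0 => /(n_two_orbits_normal_cycle2 refl2); rewrite twoE => ->.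
Qed.

Theorem proposition7p1 (r q : nat) (hr : 0 < r) (hq : 0 < q) :
  (exists (gT : finGroupType) (G H : {group gT}),
      [/\ H \subset G, #|H| = 2, ~~ (H <| G),
          n_fixed_cosets H G = r & n_two_orbits H G = q])
  <-> r %| 2 * q.
Proof.
split => [[gT [G [H [sHG H2 _ <- <-]]]] | /dvdnP[k two_q]].
  exact: n_fixed_cosets_dvdn.
have [k_odd | k_even] := boolP (odd k).
  have r_even : (r = r./2 * 2)%N.
    have := congr1 odd two_q; rewrite !oddM k_odd /= => /esym r_even.
    by rewrite muln2 -[LHS]odd_double_half r_even.
  apply: (@cyc_dihedral_realizes r./2 (k.+1 * 2)); rewrite ?oddM ?andbF //; lia.
by apply: (@cyc_dihedral_realizes r k.+1) => //=; rewrite ?k_even; lia.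
Qed.
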